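(* Let $T>0$ and let $(\psi,r)$ be a (differentiable) solution on $[0,T]$ of the adjoint least squares shadowing (LSS) system $$\frac{d\psi}{dt}+f_u^*\psi+J_u=r,\qquad \psi(0)=0,\ \psi(T)=0,\qquad \frac{dr}{dt}-f_u r=\frac{1}{\alpha^2}\big(\psi^Tf+J-\bar J\big)f .$$ Let $\psi^\infty$ be the adjoint shadowing direction and let $e(t)=\psi(t)-\psi^\infty(t)$. Then $e$ satisfies $$\mathcal{L}e:=-\frac{d^2e}{dt^2}-\frac{d}{dt}\big(f_u^*e\big)+f_u\frac{de}{dt}+f_uf_u^*e+\frac{1}{\alpha^2}ff^Te=0\quad\text{on }[0,T],\qquad e(0)=-\psi^\infty(0),\ e(T)=-\psi^\infty(T).$$
   Context: Let $X=\mathbb{R}^n$ with inner product $x^Ty$. Let $f:X\times\mathbb{R}\to X$ be $C^2$, fix $s\in\mathbb{R}$, and let $u(t)$, $t\ge0$, solve $\frac{du}{dt}=f(u,s)$. Write $f(t)=f(u(t),s)$, $f_u(t)=\partial f/\partial u$ at $(u(t),s)$, and $f_u^*=f_u^T$. Let $J:X\times\mathbb{R}\to\mathbb{R}$ be smooth, with $J(t)=J(u(t),s)$, $J_u(t)$ its $u$-gradient (column vector), and $\bar J=\lim_{T\to\infty}\frac1T\int_0^TJ\,dt$, assumed to exist. The constant $\alpha^2>0$ is fixed. The adjoint shadowing direction $\psi^\infty:[0,\infty)\to X$ is a bounded differentiable solution of $\frac{d\psi^\infty}{dt}+f_u^*\psi^\infty+J_u=0$ satisfying $\lim_{T\to\infty}\frac1T\int_0^T\psi^{\infty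 T}f\,dt=0$; it is assumed to exist. *)

From HB Require Import structures.
From mathcomp Require Import all_boot all_order all_algebra.
From mathcomp Require Import all_classical all_reals all_analysis.
Set Implicit Arguments. Unset Strict Implicit. Unset Printing Implicit Defensive.
Import Order.TTheory GRing.Theory Num.Theory.
Import numFieldNormedType.Exports.
Local Open Scope classical_set_scope.
Local Open Scope ring_scope.

Fixpoint Ck (R : realType) (V W : normedModType R) (k : nat) (F : V -> W)
  : Prop :=
  match k with
  | 0 => continuous F
  | k'.+1 => (forall p, differentiable F p) /\ (forall v : V, Ck k' ('D_v F))
  end.

Definition smooth (R : realType) (V W : normedModType R) (F : V -> W) : Prop :=
  forall k, Ck k F.

Definition dotv (R : realType) (n : nat) (x y : 'cV[R]_n) : R := (x^T *m y) 0 0.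

Definition jacobianM (R : realType) (n : nat) (F : 'cV[R]_n -> 'cV[R]_n)
  (x : 'cV[R]_n) : 'M[R]_n :=
  \matrix_(i, j) ('D_(delta_mx j 0) F x) i 0.

Definition gradientV (R : realType) (n : nat) (G : 'cV[R]_n -> R)
  (x : 'cV[R]_n) : 'cV[R]_n :=
  \col_i ('D_(delta_mx i 0) G x).

(* derivative of g : R -> V at t relative to the set I (one-sided at the
   endpoints of an interval, ordinary derivative at interior points) *)
Definition is_deriv_in (R : realType) (V : normedModType R) (I : set R)
  (g : R -> V) (t : R) (l : V) : Prop :=
  (fun h : R => h^-1 *: (g (h + t) - g t)) @ within (fun h => I (h + t)) 0^'
    --> l.

Definition deriv_on (R : realType) (V : normedModType R) (I : set R)
  (g : R -> V) (dg : R -> V) : Prop :=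
  forall t, I t -> is_deriv_in I g t (dg t).

Definition time_average_is (R : realType) (g : R -> R) (l : R) : Prop :=
  (fun T : R => T^-1 * \int[lebesgue_measure]_(t in `[0, T]) g t) @ +oo --> l.

(* Along the trajectory, the adjoint equation for psi^oo makes psi^oo^T f + J
   constant in time: its derivative is (dpsi^oo/dt + f_u^* psi^oo + J_u)^T f = 0.
   Comparing time averages identifies the constant as Jbar, so that
   psi^T f + J - Jbar = e^T f on [0, T].  Subtracting the two adjoint equations
   gives de/dt = r - f_u^* e; differentiating once more and substituting the
   equation for r yields L e = 0, and psi(0) = psi(T) = 0 gives the boundary
   values. *)

From HB Require Import structures.
From mathcomp Require Import all_boot all_order all_algebra.
From mathcomp Require Import all_classical all_reals all_analysis.
From mathcomp Require Import ring lra.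
Import Order.TTheory GRing.Theory Num.Theory.
Import numFieldNormedType.Exports.
Local Open Scope classical_set_scope.
Local Open Scope ring_scope.

Set Implicit Arguments.
Unset Strict Implicit.

Section RelativeDerivative.
Context {R : realType}.
Implicit Types (I P : set R) (t : R).

Lemma within_dnbhs0_neq0 P : \forall h \near within P (0 : R)^', h != 0.
Proof.
by rewrite near_withinE; apply: filterS (nbhs_dnbhs_neq (0 : R)) => h hn _; exact: hn.
Qed.

Lemma within_dnbhs0_cvg0 P : (fun h : R => h) @ within P (0 : R)^' --> (0 : R).
Proof. by do 2 apply: cvg_within_filter. Qed.

Lemma cvg_scale_littleo {U W : normedModType R} (F : set_system R) {FF : Filter F}
    (k : U -> W) (q : R -> U) (v : U) :
  k =o_ (0 : U) id -> (fun h : R => h) @ F --> (0 : R) -> q @ F --> v ->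
  (fun h => h^-1 *: k (h *: q h)) @ F --> (0 : W).
Proof.
move=> ko h0 qv; apply/cvgr0Pnorm_le => e e0.
have B0 : 0 < `|v| + 1 by rewrite ltr_wpDl.
have hq0 : (fun h => h *: q h) @ F --> (0 : U).
  by rewrite -(scale0r v); apply: cvgZ.
have kle := hq0 _ ((eqoP _ _ _).1 ko _ (divr_gt0 e0 B0)).
near=> h.
have qB : `|q h| <= `|v| + 1.
  have : `|v - q h| <= 1 by near: h; exact: (cvgrPdist_le _ _).1 qv _ ltr01.
  by move=> vq; rewrite -[q h](subKr v) (le_trans (ler_normD _ _)) // normrN lerD2l.
have [->|hn0] := eqVneq h 0; first by rewrite invr0 scale0r normr0 ltW.
rewrite normrZ normfV ler_pdivrMl ?normr_gt0 //.
apply: le_trans (_ : e / (`|v| + 1) * `|h *: q h| <= _); first by near: h.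
rewrite normrZ mulrCA mulrC [leRHS]mulrC ler_wpM2r // mulrAC ler_pdivrMr //.
by rewrite ler_wpM2l // ltW.
Unshelve. all: by end_near. Qed.

Local Notation within0 I t := (within (fun h : R => I (h + t)) (0 : R)^').

Lemma is_deriv_in_cvg {V : normedModType R} I (g : R -> V) t l :
  is_deriv_in I g t l -> g (h + t) @[h --> within0 I t] --> g t.
Proof.
move=> gl; have : h *: (h^-1 *: (g (h + t) - g t)) + g t @[h --> within0 I t]
    --> 0 *: l + g t.
  by apply: cvgD; [apply: cvgZ => //; exact: within_dnbhs0_cvg0 | exact: cvg_cst].
rewrite scale0r add0r; apply: cvg_trans; apply: near_eq_cvg.
near=> h; rewrite scalerA mulfV ?scale1r ?subrK //.
by near: h; exact: within_dnbhs0_neq0.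
Unshelve. all: by end_near. Qed.

Lemma cvg_mxP {T : Type} (F : set_system T) {FF : Filter F} m k
    (g : T -> 'M[R]_(m, k)) (l : 'M[R]_(m, k)) :
  g @ F --> l <-> forall i j, (fun x => g x i j) @ F --> l i j.
Proof.
split=> [gl i j | gl].
  exact: cvg_comp gl (@coord_continuous R m k i j l).
apply/cvgrPdist_le => /= e e0; near=> x.
rewrite /Num.Def.normr /= mx_normrE (bigmax_le _ (ltW e0)) //= => ij _.
rewrite !mxE /=; move: ij; near: x; apply: filter_forall => /= ij.
exact: (cvgrPdist_le _ _).1 (gl ij.1 ij.2) _ e0.
Unshelve. all: by end_near. Qed.

Lemma is_deriv_in_mxP m k I (g : R -> 'M[R]_(m, k)) t (l : 'M[R]_(m, k)) :
  is_deriv_in I g t l <-> forall i j, is_deriv_in I (fun x => g x i j) t (l i j).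
Proof.
have E i j : (fun h => (h^-1 *: (g (h + t) - g t)) i j) =
    (fun h => h^-1 *: (g (h + t) i j - g t i j)).
  by apply/funext => h; rewrite !mxE.
rewrite /is_deriv_in cvg_mxP.
by split=> gl i j; [rewrite -E | rewrite E]; exact: gl.
Qed.

Lemma is_deriv_inD {V : normedModType R} I (a b : R -> V) t da db :
  is_deriv_in I a t da -> is_deriv_in I b t db ->
  is_deriv_in I (fun x => a x + b x) t (da + db).
Proof.
move=> Ha Hb; rewrite /is_deriv_in.
have -> : (fun h => h^-1 *: (a (h + t) + b (h + t) - (a t + b t))) =
    (fun h => h^-1 *: (a (h + t) - a t) + h^-1 *: (b (h + t) - b t)).
  by apply/funext => h; rewrite -scalerDr opprD addrACA.
exact: cvgD.
Qed.

Lemma is_deriv_inN {V : normedModType R} I (a : R -> V) t da :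
  is_deriv_in I a t da -> is_deriv_in I (fun x => - a x) t (- da).
Proof.
move=> Ha; rewrite /is_deriv_in.
have -> : (fun h => h^-1 *: (- a (h + t) - - a t)) =
    (fun h => - (h^-1 *: (a (h + t) - a t))).
  by apply/funext => h; rewrite -scalerN opprD.
exact: cvgN.
Qed.

Lemma is_deriv_inB {V : normedModType R} I (a b : R -> V) t da db :
  is_deriv_in I a t da -> is_deriv_in I b t db ->
  is_deriv_in I (fun x => a x - b x) t (da - db).
Proof. by move=> Ha Hb; apply: is_deriv_inD Ha _; exact: is_deriv_inN. Qed.

Lemma is_deriv_inM I (a b : R -> R) t da db :
  is_deriv_in I a t da -> is_deriv_in I b t db ->
  is_deriv_in I (fun x => a x * b x) t (da * b t + a t * db).
Proof.
move=> Ha Hb; rewrite /is_deriv_in.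
have -> : (fun h => h^-1 *: (a (h + t) * b (h + t) - a t * b t)) =
    (fun h => (h^-1 *: (a (h + t) - a t)) * b (h + t)
              + a t * (h^-1 *: (b (h + t) - b t))).
  by apply/funext => h; rewrite /GRing.scale /=; ring.
have Hb0 := is_deriv_in_cvg Hb.
by apply: cvgD; [exact: cvgM | exact: cvgM (cvg_cst _) Hb].
Qed.

Lemma is_deriv_in_sum I (A : Type) (s : seq A) (a : A -> R -> R) (da : A -> R) t :
  (forall k, is_deriv_in I (a k) t (da k)) ->
  is_deriv_in I (fun x => \sum_(k <- s) a k x) t (\sum_(k <- s) da k).
Proof.
move=> Ha; rewrite /is_deriv_in.
have -> : (fun h => h^-1 *: (\sum_(k <- s) a k (h + t) - \sum_(k <- s) a k t)) =
    (fun h => \sum_(k <- s) h^-1 *: (a k (h + t) - a k t)).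
  by apply/funext => h; rewrite -sumrB scaler_sumr.
by apply: (@cvg_big _ _ +%R 0 xpredT add_continuous) => // k _; exact: Ha.
Qed.

Lemma is_deriv_in_mulmx I m p q (A : R -> 'M[R]_(m, p)) (B : R -> 'M[R]_(p, q)) t
    (dA : 'M[R]_(m, p)) (dB : 'M[R]_(p, q)) :
  is_deriv_in I A t dA -> is_deriv_in I B t dB ->
  is_deriv_in I (fun x => A x *m B x) t (dA *m B t + A t *m dB).
Proof.
move=> /is_deriv_in_mxP HA /is_deriv_in_mxP HB; apply/is_deriv_in_mxP => i j.
have -> : (fun x => (A x *m B x) i j) = (fun x => \sum_k A x i k * B x k j).
  by apply/funext => x; rewrite mxE.
rewrite !mxE -big_split /=.
by apply: is_deriv_in_sum => k; apply: is_deriv_inM.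
Qed.

Lemma is_deriv_in_trmx I m p (A : R -> 'M[R]_(m, p)) t (dA : 'M[R]_(m, p)) :
  is_deriv_in I A t dA -> is_deriv_in I (fun x => (A x)^T) t dA^T.
Proof.
move=> /is_deriv_in_mxP HA; apply/is_deriv_in_mxP => i j.
have -> : (fun x => (A x)^T i j) = (fun x => A x j i).
  by apply/funext => x; rewrite mxE.
by rewrite mxE.
Qed.

Lemma is_deriv_in_subset {V : normedModType R} I I' (g : R -> V) t l :
  I `<=` I' -> is_deriv_in I' g t l -> is_deriv_in I g t l.
Proof.
move=> II' gl; apply: cvg_trans gl; apply: cvg_fmap2.
by apply: within_subset => h; exact: II'.
Qed.

Lemma eq_is_deriv_in {V : normedModType R} I (g1 g2 : R -> V) t l :
  I t -> (forall x, I x -> g1 x = g2 x) ->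
  is_deriv_in I g1 t l -> is_deriv_in I g2 t l.
Proof.
move=> It g12 gl; apply: cvg_trans gl; apply: near_eq_cvg.
by rewrite near_withinE; apply: filterE => h Ih /=; rewrite !g12.
Qed.

Lemma is_deriv_in_comp {U W : normedModType R} I (c : R -> U) (F : U -> W) t v :
  is_deriv_in I c t v -> differentiable F (c t) ->
  is_deriv_in I (F \o c) t ('d F (c t) v).
Proof.
move=> cv dF; set q := fun h : R => h^-1 *: (c (h + t) - c t).
set k := F \o shift (c t) - (cst (F (c t)) + 'd F (c t)).
have ko : k =o_ (0 : U) id by apply/eqoP/(eqaddoP _ _ _ _).1/diff_locally.
have : 'd F (c t) (q h) + h^-1 *: k (h *: q h) @[h --> within0 I t]
    --> 'd F (c t) v + 0.
  apply: cvgD; last exact: cvg_scale_littleo ko (within_dnbhs0_cvg0 _) cv.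
  by apply: cvg_comp cv _; exact: diff_continuous.
rewrite addr0; apply: cvg_trans; apply: near_eq_cvg.
near=> h.
have hn0 : h != 0 by near: h; exact: within_dnbhs0_neq0.
have hq : h *: q h = c (h + t) - c t by rewrite /q scalerA mulfV ?scale1r.
have kE : k (h *: q h) = F (c (h + t)) - F (c t) - h *: 'd F (c t) (q h).
  by rewrite /k !fctE /shift -[h *: 'd F _ _]linearZ hq subrK opprD addrA.
by rewrite kE scalerBr scalerA mulVf // scale1r addrC subrK.
Unshelve. all: by end_near. Qed.

Lemma is_deriv_in_pair {U : normedModType R} I (c : R -> U) (s : R) t v :
  is_deriv_in I c t v -> is_deriv_in I (fun x => (c x, s)) t (v, 0).
Proof.
move=> cv; rewrite /is_deriv_in.
have -> : (fun h => h^-1 *: ((c (h + t), s) - (c t, s))) =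
    (fun h => (h^-1 *: (c (h + t) - c t), h^-1 *: (s - s))) by [].
apply: (@cvg_pair _ _ _ _ (nbhs v) (nbhs (0 : R))) => //.
rewrite subrr; under eq_fun do rewrite scaler0; exact: cvg_cst.
Qed.

Lemma is_deriv_in_comp_pair {U W : normedModType R} I (c : R -> U)
    (F : U * R -> W) s t v :
  is_deriv_in I c t v -> differentiable F (c t, s) ->
  is_deriv_in I (fun x => F (c x, s)) t ('d F (c t, s) (v, 0)).
Proof. by move=> cv dF; exact: is_deriv_in_comp (is_deriv_in_pair s cv) dF. Qed.

Local Notation nonneg := [set x : R | 0 <= x].

Lemma is_deriv_in_nonneg_is_derive (g : R -> R) t l :
  0 < t -> is_deriv_in nonneg g t l -> is_derive t 1 g l.
Proof.
move=> t0 gl.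
have dq : (fun h => h^-1 *: (g (h *: 1 + t) - g t)) @ 0^' --> l.
  under eq_fun do rewrite [_ *: 1]mulr1.
  apply: cvg_trans gl; apply: cvg_fmap2 => A PA.
  near=> h; apply: (_ : nonneg (h + t) -> A h); first by near: h.
  have : `|h| < t by near: h; exact: dnbhs0_lt.
  by rewrite ltr_norml => /andP[+ _]; rewrite /= -subr_gt0 opprK addrC => /ltW.
apply: DeriveDef; first by apply/cvg_ex; exists l.
exact: cvg_lim.
Unshelve. all: by end_near. Qed.

Lemma deriv_on_nonneg_continuous (g dg : R -> R) x :
  deriv_on nonneg g dg -> 0 < x -> {within `[0, x], continuous g}.
Proof.
move=> gd x0.
have gc (y : R) : 0 < y -> g z @[z --> y] --> g y.
  move=> y0; have [dgy _] := is_deriv_in_nonneg_is_derive y0 (gd y (ltW y0)).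
  by apply: differentiable_continuous; exact/derivable1_diffP.
apply/continuous_within_itvP => //; split.
- by move=> y; rewrite in_itv /= => /andP[y0 _]; exact: gc.
- have := is_deriv_in_cvg (gd 0 (lexx 0)).
  under eq_fun do rewrite addr0.
  apply: cvg_trans; apply: cvg_fmap2 => A PA.
  have {}PA : \forall h \near (0 : R), h != 0 -> nonneg (h + 0) -> A h := PA.
  suff : \forall h \near (0 : R), 0 < h -> A h by [].
  by apply: filterS PA => h PA h0; apply: PA; rewrite ?gt_eqF //= addr0 ltW.
- exact: cvg_within_filter (gc _ x0).
Qed.

Lemma deriv_on_nonneg_cst (g : R -> R) :
  deriv_on nonneg g (fun=> 0) -> forall x, 0 <= x -> g x = g 0.
Proof.
move=> g0 x; rewrite le_eqVlt => /predU1P[<- // | x0].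
case: (@MVT R g (fun=> 0) 0 x x0) => [y | | y _].
- rewrite in_itv /= => /andP[y0 _].
  exact: is_deriv_in_nonneg_is_derive y0 (g0 y (ltW y0)).
- exact: deriv_on_nonneg_continuous g0 x0.
- by rewrite mul0r => /eqP; rewrite subr_eq0 => /eqP.
Qed.

Lemma is_deriv_in_dotv I m (a b : R -> 'cV[R]_m) t da db :
  is_deriv_in I a t da -> is_deriv_in I b t db ->
  is_deriv_in I (fun x => dotv (a x) (b x)) t (dotv da (b t) + dotv (a t) db).
Proof.
move=> Ha Hb; have := is_deriv_in_mulmx (is_deriv_in_trmx Ha) Hb.
by move=> /is_deriv_in_mxP/(_ 0 0); rewrite mxE.
Qed.

End RelativeDerivative.

Section PartialDerivatives.
Context {R : realType} {n : nat}.
Implicit Types (v x w : 'cV[R]_n) (s : R).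

Lemma derive_partial1 {W : normedModType R} (F : 'cV[R]_n * R -> W) v x s :
  'D_v (fun y => F (y, s)) x = 'D_((v, 0)) F (x, s).
Proof.
rewrite /derive; do 2 f_equal; apply/funext => h /=.
congr (_ *: (F _ - _)).
have -> : h *: ((v, 0) : 'cV[R]_n * R) + (x, s) = (h *: v + x, h *: 0 + s) by [].
by rewrite scaler0 add0r.
Qed.

Lemma diff_partial1_sum {W : normedModType R} (F : 'cV[R]_n * R -> W) x s w :
  differentiable F (x, s) ->
  'd F (x, s) (w, 0) = \sum_j w j 0 *: 'D_((delta_mx j 0, 0)) F (x, s).
Proof.
move=> dF; under eq_bigr do rewrite deriveE //.
pose L y := 'd F (x, s) (y, 0).
have L0 : L 0 = 0 by exact: linear0.
have LD y z : L (y + z) = L y + L z.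
  rewrite /L -linearD /=; congr ('d F (x, s) _).
  by rewrite -[RHS]/(y + z, 0 + 0) addr0.
have LZ a y : L (a *: y) = a *: L y.
  rewrite /L -linearZ /=; congr ('d F (x, s) _).
  by rewrite -[RHS]/(a *: y, a *: 0) scaler0.
rewrite -/(L w) {1}[w]matrix_sum_delta (big_morph L LD L0).
by apply: eq_bigr => j _; rewrite big_ord1 LZ.
Qed.

Lemma jacobianM_mulmx (f : 'cV[R]_n * R -> 'cV[R]_n) x s w :
  differentiable f (x, s) ->
  jacobianM (fun y => f (y, s)) x *m w = 'd f (x, s) (w, 0).
Proof.
move=> df; rewrite diff_partial1_sum //; apply/matrixP => i k.
rewrite (ord1 k) !mxE summxE; apply: eq_bigr => j _.
by rewrite !mxE derive_partial1 mulrC.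
Qed.

Lemma gradientV_dotv (J : 'cV[R]_n * R -> R) x s w :
  differentiable J (x, s) ->
  dotv (gradientV (fun y => J (y, s)) x) w = 'd J (x, s) (w, 0).
Proof.
move=> dJ; rewrite diff_partial1_sum // /dotv !mxE; apply: eq_bigr => j _.
by rewrite !mxE derive_partial1 mulrC.
Qed.

End PartialDerivatives.

Section Dotv.
Context {R : realType} {m : nat}.
Implicit Types x y z : 'cV[R]_m.

Lemma dotvBl x y z : dotv (x - y) z = dotv x z - dotv y z.
Proof. by rewrite /dotv raddfB /= mulmxBl !mxE. Qed.

Lemma mulmx_tr_dotv x y : x *m (x^T *m y) = dotv y x *: x.
Proof.
rewrite [x^T *m y]mx11_scalar mul_mx_scalar /dotv; congr (_ *: _).
by rewrite -[y^T *m x]trmxK trmx_mul trmxK [RHS]mxE.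
Qed.

End Dotv.

Section TimeAverage.
Context {R : realType}.

Lemma eq_time_average_is (g1 g2 : R -> R) l :
  (forall t, 0 <= t -> g1 t = g2 t) ->
  time_average_is g1 l -> time_average_is g2 l.
Proof.
move=> g12; apply: cvg_trans; apply: near_eq_cvg; apply: nearW => T /=.
congr (_ * _); apply: eq_Rintegral => t.
by rewrite inE /= in_itv /= => /andP[t0 _]; rewrite g12.
Qed.

Lemma time_average_is_cstB (c : R) (g : R -> R) l :
  (forall T, 0 < T -> lebesgue_measure.-integrable `[0, T] (EFin \o g)) ->
  time_average_is g l -> time_average_is (fun t => c - g t) (c - l).
Proof.
move=> gint gl; rewrite /time_average_is; apply: cvg_trans (cvgB (cvg_cst c) gl).
apply: near_eq_cvg; near=> T.
have T0 : 0 < T by near: T; apply: nbhs_pinfty_gt; rewrite num_real.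
have cint : lebesgue_measure.-integrable `[0, T] (EFin \o fun=> c).
  apply: continuous_compact_integrable; first exact: segment_compact.
  by move=> ?; exact: cvg_cst.
rewrite RintegralB ?Rintegral_cst ?gint //= lebesgue_measure_itv /= lte_fin T0 /= subr0.
by rewrite !fctE mulrBr [c * T]mulrC mulKf ?gt_eqF.
Unshelve. all: by end_near. Qed.

End TimeAverage.

Section AdjointFlow.
Variables (R : realType) (n : nat) (f : 'cV[R]_n * R -> 'cV[R]_n)
  (J : 'cV[R]_n * R -> R) (s : R) (u : R -> 'cV[R]_n).
Hypotheses (df : forall p, differentiable f p) (dJ : forall p, differentiable J p).

Local Notation nonneg := [set t : R | 0 <= t].
Local Notation fv t := (f (u t, s)).
Local Notation fu t := (jacobianM (fun x => f (x, s)) (u t)).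
Local Notation Ju t := (gradientV (fun x => J (x, s)) (u t)).

Hypothesis du : deriv_on nonneg u (fun t => fv t).

Lemma deriv_on_flow : deriv_on nonneg (fun t => fv t) (fun t => fu t *m fv t).
Proof.
by move=> t t0; rewrite jacobianM_mulmx //; exact: is_deriv_in_comp_pair (du t0) _.
Qed.

Lemma deriv_on_cost :
  deriv_on nonneg (fun t => J (u t, s)) (fun t => dotv (Ju t) (fv t)).
Proof.
by move=> t t0; rewrite gradientV_dotv //; exact: is_deriv_in_comp_pair (du t0) _.
Qed.

Lemma deriv_on_jacobian : (forall v p, differentiable ('D_v f) p) ->
  exists dfu, deriv_on nonneg (fun t => fu t) dfu.
Proof.
move=> dDf; exists (fun t => \matrix_(i, j)
  ('d ('D_((delta_mx j 0, 0) : 'cV[R]_n * R) f) (u t, s) (fv t, 0)) i 0).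
move=> t t0; apply/is_deriv_in_mxP => i j; rewrite mxE.
have -> : (fun x => fu x i j) =
    (fun x => 'D_((delta_mx j 0, 0) : 'cV[R]_n * R) f (u x, s) i 0).
  by apply/funext => x; rewrite mxE derive_partial1.
have := is_deriv_in_comp_pair (du t0) (dDf (delta_mx j 0, 0) (u t, s)).
by move=> /is_deriv_in_mxP; apply.
Qed.

Lemma adjoint_invariant (psi dpsi : R -> 'cV[R]_n) :
  deriv_on nonneg psi dpsi ->
  (forall t, 0 <= t -> dpsi t + (fu t)^T *m psi t + Ju t = 0) ->
  forall t, 0 <= t ->
    dotv (psi t) (fv t) + J (u t, s) = dotv (psi 0) (fv 0) + J (u 0, s).
Proof.
move=> dpsiP adj; apply: (deriv_on_nonneg_cst (g := fun t => _ + _)) => t t0.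
have := is_deriv_inD (is_deriv_in_dotv (dpsiP t t0) (deriv_on_flow t0))
  (deriv_on_cost t0).
suff -> : dotv (dpsi t) (fv t) + dotv (psi t) (fu t *m fv t)
  + dotv (Ju t) (fv t) = 0 by [].
have := congr1 (fun a => (a^T *m fv t) 0 0) (adj t t0).
by rewrite /dotv /= !raddfD /= !mulmxDl trmx_mul trmxK mulmxA trmx0 mul0mx !mxE.
Qed.

Lemma adjoint_invariant_eq_average (psi dpsi : R -> 'cV[R]_n) (Jbar : R) :
  deriv_on nonneg psi dpsi ->
  (forall t, 0 <= t -> dpsi t + (fu t)^T *m psi t + Ju t = 0) ->
  time_average_is (fun t => J (u t, s)) Jbar ->
  time_average_is (fun t => dotv (psi t) (fv t)) 0 ->
  forall t, 0 <= t -> dotv (psi t) (fv t) + J (u t, s) = Jbar.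
Proof.
move=> dpsiP adj avJ avpsi t t0; rewrite (adjoint_invariant dpsiP adj t0).
set c := _ + _.
have Jint T : 0 < T ->
    lebesgue_measure.-integrable `[0, T] (EFin \o fun t => J (u t, s)).
  move=> T0; apply: continuous_compact_integrable; first exact: segment_compact.
  exact: deriv_on_nonneg_continuous deriv_on_cost T0.
have avc : time_average_is (fun t => dotv (psi t) (fv t)) (c - Jbar).
  have := time_average_is_cstB (c := c) Jint avJ; apply: eq_time_average_is => x x0.
  by rewrite /c -(adjoint_invariant dpsiP adj x0) addrK.
by apply/eqP; rewrite -subr_eq0 (cvg_unique _ avc avpsi).
Qed.

End AdjointFlow.

Unset Implicit Arguments.

Theorem mainTheorem2 (R : realType) (n : nat)
  (f : 'cV[R]_n * R -> 'cV[R]_n) (J : 'cV[R]_n * R -> R) (s alpha : R)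
  (u : R -> 'cV[R]_n) (Jbar : R) (psiinf : R -> 'cV[R]_n)
  (T : R) (psi r dpsi dr : R -> 'cV[R]_n) :
  let fv := fun t => f (u t, s) in
  let fu := fun t => jacobianM (fun x => f (x, s)) (u t) in
  let Ju := fun t => gradientV (fun x => J (x, s)) (u t) in
  let Jv := fun t => J (u t, s) in
  let I := [set t : R | 0 <= t <= T] in
  (* standing assumptions *)
  Ck 2 f -> smooth J -> 0 < alpha ^+ 2 ->
  deriv_on [set t : R | 0 <= t] u fv ->
  time_average_is Jv Jbar ->
  (* psiinf is the adjoint shadowing direction *)
  (exists dpinf, deriv_on [set t : R | 0 <= t] psiinf dpinf /\
     forall t, 0 <= t -> dpinf t + (fu t)^T *m psiinf t + Ju t = 0) ->
  (exists M : R, forall t, 0 <= t -> `|psiinf t| <= M) ->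
  time_average_is (fun t => dotv (psiinf t) (fv t)) 0 ->
  (* (psi, r) solves the adjoint LSS system on [0, T] *)
  0 < T ->
  deriv_on I psi dpsi -> deriv_on I r dr ->
  (forall t, I t -> dpsi t + (fu t)^T *m psi t + Ju t = r t) ->
  psi 0 = 0 -> psi T = 0 ->
  (forall t, I t -> dr t - fu t *m r t =
     ((alpha ^+ 2)^-1 * (dotv (psi t) (fv t) + Jv t - Jbar)) *: fv t) ->
  let e := fun t => psi t - psiinf t in
  exists de d2e dfue : R -> 'cV[R]_n,
    deriv_on I e de /\ deriv_on I de d2e /\
    deriv_on I (fun t => (fu t)^T *m e t) dfue /\
    (forall t, I t ->
       - d2e t - dfue t + fu t *m de t + fu t *m ((fu t)^T *m e t)
       + (alpha ^+ 2)^-1 *: (fv t *m ((fv t)^T *m e t)) = 0) /\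
    e 0 = - psiinf 0 /\ e T = - psiinf T.
Proof.
move=> fv fu Ju Jv I [df dDf] /(_ 1%N)[dJ _] _ du avJ [dpinf [dpinfP adj]] _ avpsi
  _ dpsiP drP lss_psi psi0 psiT lss_r e.
have nonnegI t : I t -> 0 <= t by case/andP.
have [dfu dfuP] := deriv_on_jacobian du (fun v => (dDf v).1).
pose de t := dpsi t - dpinf t.
have deP : deriv_on I e de := fun t It =>
  is_deriv_inB (dpsiP t It) (is_deriv_in_subset nonnegI (dpinfP t (nonnegI t It))).
have deE t : I t -> de t = r t - (fu t)^T *m e t.
  move=> It; apply/matrixP => i j; move/matrixP/(_ i j): (adj t (nonnegI t It)).
  by rewrite -(lss_psi t It) mulmxBr !mxE; lra.
pose dfue t := (dfu t)^T *m e t + (fu t)^T *m de t.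
have dfueP : deriv_on I (fun t => (fu t)^T *m e t) dfue := fun t It =>
  is_deriv_in_mulmx
    (is_deriv_in_trmx (is_deriv_in_subset nonnegI (dfuP t (nonnegI t It)))) (deP t It).
exists de, (fun t => dr t - dfue t), dfue; split => //; split.
  move=> t It; apply: (eq_is_deriv_in It (fun x Ix => esym (deE x Ix))).
  exact: is_deriv_inB (drP t It) (dfueP t It).
split => //; split; last by rewrite /e psi0 psiT !sub0r.
move=> t It.
have inv := adjoint_invariant_eq_average df dJ du dpinfP adj avJ avpsi (nonnegI t It).
move: (lss_r t It); rewrite mulmx_tr_dotv -inv /Jv /fv opprD addrACA subrr addr0.
rewrite -dotvBl -/(e t) deE // -scalerA => <-.
by rewrite mulmxBr; apply/matrixP => i j; rewrite !mxE; lra.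
Qed.
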